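(* For all sufficiently large $n$, there is a covering $3$-colouring of the edges of $K_n^{(4)}$ with no $5$-set of vertices whose $4$-subsets receive all three colours.
   Context: $K_n^{(4)}$ is the complete $4$-uniform hypergraph on $n$ vertices (edges are all $4$-subsets). A $4$-uniform hypergraph on vertex set $V$ is a covering if every $3$-subset of $V$ is contained in some edge. A colouring of the edges of $K_n^{(4)}$ is covering if for each colour, the $4$-graph on all $n$ vertices formed by the edges of that colour is a covering. *)

From mathcomp Require Import all_boot.
Set Implicit Arguments. Unset Strict Implicit. Unset Printing Implicit Defensive.

(* An edge-colouring of K_n^(4) with k colours: a function assigning a colour
   to every subset of 'I_n; only its values on 4-subsets are relevant. *)
Definition colouring (n k : nat) := {set 'I_n} -> 'I_k.

Definition is_covering (n : nat) (H : {set {set 'I_n}}) : Prop :=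
  forall T : {set 'I_n}, #|T| = 3 -> exists2 E, E \in H & T \subset E.

Definition colour_class (n k : nat) (c : colouring n k) (i : 'I_k)
  : {set {set 'I_n}} := [set E : {set 'I_n} | (#|E| == 4) && (c E == i)].

Definition covering_colouring (n k : nat) (c : colouring n k) : Prop :=
  forall i : 'I_k, is_covering (colour_class c i).

Definition rainbow5 (n k : nat) (c : colouring n k) (S : {set 'I_n}) : Prop :=
  #|S| = 5 /\ forall i : 'I_k, exists2 E : {set 'I_n},
     (E \subset S) && (#|E| == 4) & c E = i.

From mathcomp Require Import all_boot.
From mathcomp Require Import zify.
Set Implicit Arguments. Unset Strict Implicit. Unset Printing Implicit Defensive.

(* Give every vertex x one of 14 labels, (x mod 7, parity of x div 7), so that
   for n >= 56 each label is carried by at least 4 vertices, and colour a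
   4-set by a function of the multiset of its labels.  A 3-set T is then
   covered in colour i as soon as some label a completes the labels of T to a
   multiset of colour i, since a vertex of label a lies outside T; and a 5-set
   is rainbow iff deleting one of its labels in the five possible ways yields
   multisets of all three colours.  Both conditions concern only multisets of
   labels, i.e. finitely many sorted label sequences, and are checked by
   computation. *)

Lemma perm_rem (T : eqType) (x : T) (s1 s2 : seq T) :
  perm_eq s1 s2 -> perm_eq (rem x s1) (rem x s2).
Proof.
move=> eq12; apply/permP => P.
by rewrite !count_rem (permP eq12) (perm_mem eq12).
Qed.

Lemma perm_map_rem (T1 T2 : eqType) (f : T1 -> T2) (x : T1) (s : seq T1) :
  x \in s -> perm_eq (map f (rem x s)) (rem (f x) (map f s)).
Proof.
move=> xs; apply/permP => P.
by rewrite count_rem !count_map count_rem (map_f f xs) xs.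
Qed.

Lemma perm_enum_setU1 (T : finType) (x : T) (A : {set T}) :
  x \notin A -> perm_eq (enum (x |: A)) (x :: enum A).
Proof.
move=> xA; apply: uniq_perm; rewrite /= ?enum_uniq ?mem_enum ?xA // => y.
by rewrite mem_enum in_setU1 inE mem_enum.
Qed.

Lemma perm_enum_setD1 (T : finType) (x : T) (A : {set T}) :
  x \in A -> perm_eq (enum (A :\ x)) (rem x (enum A)).
Proof.
move=> xA; apply: uniq_perm; rewrite ?enum_uniq ?rem_uniq ?enum_uniq // => y.
by rewrite mem_enum (mem_rem_uniq _ (enum_uniq _)) in_setD1 inE mem_enum.
Qed.

Lemma subset_cardS_setD1 (T : finType) (E S : {set T}) :
  E \subset S -> #|E|.+1 = #|S| -> exists2 x, x \in S & E = S :\ x.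
Proof.
move=> ES cardS.
have /subsetPn[x xS xE] : ~~ (S \subset E).
  by apply/negP => /subset_leq_card; rewrite -cardS ltnn.
exists x => //; apply/eqP; rewrite eqEcard.
move: cardS; rewrite (cardsD1 x S) xS add1n => -[->]; rewrite leqnn andbT.
apply/subsetP => y yE; rewrite in_setD1 (subsetP ES) // andbT.
by apply: contraNneq xE => <-.
Qed.

Fixpoint nondecr_seqs (m k lo : nat) : seq (seq nat) :=
  if k is k'.+1 then
    [seq a :: l | a <- iota lo (m - lo), l <- nondecr_seqs m k' a]
  else [:: [::]].

Lemma mem_nondecr_seqs m lo (l : seq nat) :
  sorted leq l -> all (leq lo) l -> all (gtn m) l -> l \in nondecr_seqs m (size l) lo.
Proof.
elim: l lo => [|a l IHl] lo //= sorted_al /andP[lo_a lo_l] /andP[a_m l_m].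
apply: (allpairs_f_dep (fun a l => a :: l)); first by rewrite mem_iota; lia.
apply: IHl l_m; first exact: path_sorted sorted_al.
exact: order_path_min leq_trans sorted_al.
Qed.

Lemma nondecr_seqs_complete m k (P : pred (seq nat)) :
  (forall l1 l2, perm_eq l1 l2 -> P l1 = P l2) -> all P (nondecr_seqs m k 0) ->
  forall l, size l = k -> all (gtn m) l -> P l.
Proof.
move=> P_perm /allP allP_sorted l size_l l_m.
rewrite -(P_perm _ _ (permEl (perm_sort leq l))); apply: allP_sorted.
rewrite -size_l -(size_sort leq); apply: mem_nondecr_seqs.
- exact: (sort_sorted leq_total).
- by apply/allP.
- by rewrite (perm_all _ (permEl (perm_sort _ _))).
Qed.

Definition extendable (g : seq nat -> nat) (k m : nat) (l : seq nat) :=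
  all (fun i => has (fun a => g (a :: l) == i) (iota 0 m)) (iota 0 k).

Definition rainbow_free (g : seq nat -> nat) (k : nat) (l : seq nat) :=
  has (fun i => all (fun a => g (rem a l) != i) l) (iota 0 k).

Section LabelColouring.

Variables (n k m : nat) (lab : 'I_n -> nat) (g : seq nat -> nat).
Hypothesis lab_lt : forall x, lab x < m.
Hypothesis label_classes : forall a, a < m -> 3 < #|[set x | lab x == a]|.
Hypothesis g_lt : forall l, g l < k.
Hypothesis g_perm : forall l1 l2, perm_eq l1 l2 -> g l1 = g l2.

Definition labels (A : {set 'I_n}) := map lab (enum A).

Definition label_colouring : colouring n k := fun E => Ordinal (g_lt (labels E)).

Lemma size_labels A : size (labels A) = #|A|.
Proof. by rewrite size_map cardE. Qed.

Lemma labels_lt A : all (gtn m) (labels A).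
Proof. by apply/allP => _ /mapP[x _ ->]; apply: lab_lt. Qed.

Lemma label_colouring_setU1 x (T : {set 'I_n}) :
  x \notin T -> val (label_colouring (x |: T)) = g (lab x :: labels T).
Proof. by move=> xT; apply: g_perm; apply: (perm_map lab (perm_enum_setU1 xT)). Qed.

Lemma label_colouring_setD1 x (S : {set 'I_n}) :
  x \in S -> val (label_colouring (S :\ x)) = g (rem (lab x) (labels S)).
Proof.
move=> xS; apply: g_perm; apply: perm_trans (perm_map lab (perm_enum_setD1 xS)) _.
by apply: perm_map_rem; rewrite mem_enum.
Qed.

Lemma extendable_perm l1 l2 :
  perm_eq l1 l2 -> extendable g k m l1 = extendable g k m l2.
Proof.
move=> eq12; apply: eq_all => i; apply: eq_has => a.
by rewrite (g_perm (_ : perm_eq (a :: l1) (a :: l2))) ?perm_cons.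
Qed.

Lemma rainbow_free_perm l1 l2 :
  perm_eq l1 l2 -> rainbow_free g k l1 = rainbow_free g k l2.
Proof.
move=> eq12; apply: eq_has => i; rewrite (perm_all _ eq12).
by apply: eq_all => a; rewrite (g_perm (perm_rem a eq12)).
Qed.

Lemma fresh_vertex (T : {set 'I_n}) a :
  #|T| = 3 -> a < m -> exists2 x, lab x = a & x \notin T.
Proof.
move=> cardT a_m.
have /subsetPn[x] : ~~ ([set x | lab x == a] \subset T).
  by apply/negP => /subset_leq_card; rewrite cardT leqNgt label_classes.
by rewrite inE => /eqP; exists x.
Qed.

Lemma label_colouring_covering :
  all (extendable g k m) (nondecr_seqs m 3 0) -> covering_colouring label_colouring.
Proof.
move=> extend i T cardT.
have /allP/(_ (val i)) := nondecr_seqs_complete extendable_perm extend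
  (etrans (size_labels T) cardT) (labels_lt T).
rewrite mem_iota ltn_ord => /(_ isT)/hasP[a]; rewrite mem_iota => a_m /eqP g_a.
have [x lab_x xT] := fresh_vertex cardT a_m.
exists (x |: T); last exact: subsetUr.
rewrite inE cardsU1 xT cardT /=; apply/eqP/val_inj.
by rewrite label_colouring_setU1 // lab_x.
Qed.

Lemma label_colouring_no_rainbow5 :
  all (rainbow_free g k) (nondecr_seqs m 5 0) -> forall S, ~ rainbow5 label_colouring S.
Proof.
move=> free S [cardS rainbow].
have /hasP[i] := nondecr_seqs_complete rainbow_free_perm free
  (etrans (size_labels S) cardS) (labels_lt S).
rewrite mem_iota => i_k /allP avoid_i.
have [E /andP[ES /eqP cardE] col_E] := rainbow (Ordinal i_k).
have [x xS E_Sx] := subset_cardS_setD1 ES (etrans (congr1 _ cardE) (esym cardS)).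
move: (avoid_i (lab x) (map_f lab (etrans (mem_enum _ _) xS))).
by rewrite -label_colouring_setD1 // -E_Sx col_E eqxx.
Qed.

End LabelColouring.

Definition label7x2 n (x : 'I_n) : nat := x %% 7 + 7 * odd (x %/ 7).

Lemma label7x2_lt n (x : 'I_n) : label7x2 x < 14.
Proof. by rewrite /label7x2; have := ltn_pmod x (isT : 0 < 7); case: odd => /=; lia. Qed.

Lemma label7x2_classes n a : 56 <= n -> a < 14 -> 3 < #|[set x : 'I_n | label7x2 x == a]|.
Proof.
move=> n56 a14.
have q2 : a %/ 7 < 2 by rewrite ltn_divLR.
have w_n (j : 'I_4) : 7 * (2 * j + a %/ 7) + a %% 7 < n.
  by have := ltn_ord j; have := ltn_pmod a (isT : 0 < 7); lia.
pose w j := Ordinal (w_n j).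
have w_inj : injective w by move=> j1 j2 /(congr1 val) /= eq_v; apply: val_inj => /=; lia.
have lab_w j : label7x2 (w j) = a.
  have a_mod := ltn_pmod a (isT : 0 < 7).
  rewrite /label7x2 /= mulnC modnMDl modn_mod divnMDl // (divn_small a_mod).
  rewrite addn0 oddD oddM /=; have := divn_eq a 7.
  by case: (a %/ 7) q2 => [|[|]] //= _; lia.
have /subset_leq_card : [set w j | j in 'I_4] \subset [set x | label7x2 x == a].
  by apply/subsetP => _ /imsetP[j _ ->]; rewrite inE lab_w.
by rewrite card_imset // card_ord.
Qed.

Definition avoids_translate (r ds : seq nat) :=
  has (fun t => all (fun d => (t + d) %% 7 \notin r) ds) (iota 0 7).

(* The match is on the number of distinct residues mod 7 of a 4-multiset of
   labels, i.e. on its residue pattern rrrr; rrrs or rrss; rrst; rstu. *)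
Definition colour (l : seq nat) : nat :=
  let r := [seq a %% 7 | a <- l] in
  match count (fun t => t \in r) (iota 0 7) with
  | 1 => if odd (count (leq 7) l) then 1 else 2
  | 2 => if has (fun t => count_mem t r == 3) (iota 0 7) then 0 else 1
  | 3 => 2
  | _ => if avoids_translate r [:: 0; 2; 4] || avoids_translate r [:: 0; 1; 5]
         then 1 else 0
  end.

Lemma colour_lt l : colour l < 3.
Proof. by rewrite /colour; case: count => [|[|[|[|]]]] //=; repeat case: ifP. Qed.

Lemma colour_perm l1 l2 : perm_eq l1 l2 -> colour l1 = colour l2.
Proof.
move=> eq12; have r12 := perm_map (modn^~ 7) eq12; have mem12 := perm_mem r12.
have avoids12 ds : avoids_translate (map (modn^~ 7) l1) ds =
                   avoids_translate (map (modn^~ 7) l2) ds.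
  by apply: eq_has => t; apply: eq_all => d; rewrite mem12.
have triple12 : (fun t => count_mem t (map (modn^~ 7) l1) == 3) =1
                (fun t => count_mem t (map (modn^~ 7) l2) == 3).
  by move=> t; rewrite /= (permP r12).
by rewrite /colour !avoids12 (permP eq12) (eq_count mem12) (eq_has triple12).
Qed.

Lemma colour_extendable : all (extendable colour 3 14) (nondecr_seqs 14 3 0).
Proof. by vm_compute. Qed.

Lemma colour_rainbow_free : all (rainbow_free colour 3) (nondecr_seqs 14 5 0).
Proof. by vm_compute. Qed.

Theorem lemma16 : exists N : nat, forall n : nat, N <= n ->
  exists c : colouring n 3,
    covering_colouring c /\ forall S : {set 'I_n}, ~ rainbow5 c S.
Proof.
exists 56 => n n56; exists (label_colouring (@label7x2 n) colour_lt); split.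
- apply: label_colouring_covering colour_extendable.
  + exact: label7x2_lt.
  + by move=> a; apply: label7x2_classes.
  + exact: colour_perm.
- apply: label_colouring_no_rainbow5 colour_rainbow_free.
  + exact: label7x2_lt.
  + exact: colour_perm.
Qed.
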